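(* Let $k$ be a perfect field of characteristic $p>0$, let $R$ be an $\mathbb N$-graded domain of finite type over $R_0=k$, and let $x\in R$ be a homogeneous element of positive degree. If $R[1/x]$ is finitely generated as a $D_R$-module, then $D_R$ has nonzero elements of negative degree.
   Context: $D_R=D_{R/k}$ is the ring of $k$-linear differential operators on $R$; since $k$ is perfect and $R$ is $F$-finite, $D_R=\bigcup_{e\ge 0}\operatorname{Hom}_{R^{p^e}}(R,R)$, where $R^{p^e}$ is the subring of $p^e$-th powers. $D_R$ is graded: $\delta$ has degree $a$ if $\delta(R_j)\subset R_{j+a}$ for all $j$. The $D_R$-module structure on $R[1/x]$ is given as follows: for $\delta\in\operatorname{Hom}_{R^{p^e}}(R,R)$, $r\in R$ and $n\le p^e$, $\delta(r/x^n)=\delta(rx^{p^e-n})/x^{p^e}$. *)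

From HB Require Import structures.
From mathcomp Require Import all_boot all_order all_algebra.
From mathcomp Require Import fraction.
Set Implicit Arguments. Unset Strict Implicit. Unset Printing Implicit Defensive.
Import Order.TTheory GRing.Theory Num.Theory.
Local Open Scope ring_scope.

Definition perfect_field (p : nat) (k : fieldType) : Prop :=
  forall a : k, exists b : k, b ^+ p = a.

(* R is of finite type over k: generated as a k-algebra by finitely many
   elements, i.e. every subset containing f(k) and the generators and closed
   under + and * is all of R. *)
Definition finite_type (k : fieldType) (R : idomainType)
    (f : {rmorphism k -> R}) : Prop :=
  exists (n : nat) (g : 'I_n -> R),
    forall S : R -> Prop,
      (forall c, S (f c)) -> (forall i, S (g i)) ->
      (forall a b, S a -> S b -> S (a + b)) ->
      (forall a b, S a -> S b -> S (a * b)) ->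
      forall r, S r.

(* An N-grading R = (+)_{j >= 0} R_j of the k-algebra R with R_0 = k.
   G j r  means  r \in R_j. *)
Definition Ngrading (k : fieldType) (R : idomainType)
    (f : {rmorphism k -> R}) (G : nat -> R -> Prop) : Prop :=
     (forall j, G j 0) /\
     (forall j a b, G j a -> G j b -> G j (a + b)) /\
     (forall j c a, G j a -> G j (f c * a)) /\
     (forall i j a b, G i a -> G j b -> G (i + j)%N (a * b)) /\
      (forall r, exists (n : nat) (a : nat -> R),
          (forall j, G j (a j)) /\ r = \sum_(j < n) a j) /\
      (forall (n : nat) (a : nat -> R), (forall j, G j (a j)) ->
          \sum_(j < n) a j = 0 -> forall j, (j < n)%N -> a j = 0) /\
     (forall r, G 0%N r <-> exists c, r = f c).

(* D_R = \bigcup_e Hom_{R^{p^e}}(R, R). *)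
Definition Hom_pe (p : nat) (R : idomainType) (e : nat) (d : R -> R) : Prop :=
  (forall a b, d (a + b) = d a + d b) /\
  (forall a r, d (a ^+ (p ^ e) * r) = a ^+ (p ^ e) * d r).

Definition in_DR (p : nat) (R : idomainType) (d : R -> R) : Prop :=
  exists e, Hom_pe p e d.

(* Homogeneous of degree a (a : int): d(R_j) \subset R_{j+a} for all j,
   where R_m = 0 for m < 0. *)
Definition Gz (R : idomainType) (G : nat -> R -> Prop) (m : int) (r : R) : Prop :=
  match m with
  | Posz n => G n r
  | Negz _ => r = 0
  end.

Definition op_has_degree (R : idomainType) (G : nat -> R -> Prop)
    (a : int) (d : R -> R) : Prop :=
  forall (j : nat) (r : R), G j r -> Gz G (j%:Z + a) (d r).

Definition DR_has_neg_degree (p : nat) (R : idomainType)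
    (G : nat -> R -> Prop) : Prop :=
  exists (d : R -> R) (a : int),
    [/\ in_DR p d, (exists r, d r != 0), a < 0 & op_has_degree G a d].

(* R[1/x], realized inside the fraction field of the domain R. *)
Definition in_loc (R : idomainType) (x : R) (u : {fraction R}) : Prop :=
  exists (r : R) (n : nat), u = tofrac r / tofrac (x ^+ n).

(* The D_R-module action on R[1/x]:  for d \in Hom_{R^{p^e}}(R,R), r \in R,
   n <= p^e,  d(r/x^n) = d(r x^{p^e-n}) / x^{p^e}.
   Dact d u v  means  d . u = v. *)
Definition Dact (p : nat) (R : idomainType) (x : R) (d : R -> R)
    (u v : {fraction R}) : Prop :=
  exists (e : nat) (r : R) (n : nat),
    [/\ Hom_pe p e d, (n <= p ^ e)%N,
        u = tofrac r / tofrac (x ^+ n)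
      & v = tofrac (d (r * x ^+ (p ^ e - n))) / tofrac (x ^+ (p ^ e))].

Definition loc_fg_over_DR (p : nat) (R : idomainType) (x : R) : Prop :=
  exists (t : nat) (g : 'I_t -> {fraction R}),
    (forall i, in_loc x (g i)) /\
    forall u, in_loc x u ->
      exists (d : 'I_t -> R -> R) (v : 'I_t -> {fraction R}),
        [/\ forall i, in_DR p (d i),
            forall i, Dact p x (d i) (g i) (v i)
          & u = \sum_(i < t) v i].

From HB Require Import structures.
From mathcomp Require Import all_boot all_order all_algebra.
From mathcomp Require Import fraction zify.
From Stdlib Require Import ClassicalEpsilon Classical.
Import Order.TTheory GRing.Theory Num.Theory.
Local Open Scope ring_scope.

(* Suppose D_R has no nonzero operator of negative degree.  For d in
   Hom_{R^{p^e}}(R,R) and a in Z, sending r to the sum over j of the degree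
   (j + a) component of d(r_j), where r_j are the homogeneous components of r,
   gives an operator of degree a that is still R^{p^e}-linear, since p^e-th
   powers of homogeneous elements are homogeneous.  For a < 0 it must vanish,
   so every element of D_R maps R_{>=L} = (+)_{j>=L} R_j into itself.
   With δ = deg x, it follows that if u = r/x^n then every d.u satisfies
   (d.u) x^N in R_{>= δ(N - n)} for all large N, and this property is stable
   under sums.  If R[1/x] were generated by r_i/x^{n_i} with all n_i <= M, it
   would hold for u = 1/x^{M+1}; but then x^{N-M-1}, which is homogeneous of
   degree δ(N - M - 1) < δ(N - M), would be zero. *)

Lemma sum_ord_widen0 {V : nmodType} {n m : nat} {a : nat -> V} :
  (n <= m)%N -> (forall j, (n <= j)%N -> a j = 0) ->
  \sum_(j < m) a j = \sum_(j < n) a j.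
Proof.
move=> le_nm a0; rewrite (big_ord_widen _ _ le_nm) [RHS]big_mkcond.
by apply: eq_bigr => j _; case: ltnP => // /a0.
Qed.

Lemma morph_add0 {U V : zmodType} {d : U -> V} :
  {morph d : u v / u + v} -> d 0 = 0.
Proof. by move=> dD; apply: (@addrI _ (d 0)); rewrite -dD !addr0. Qed.

Lemma morph_add_sum {U V : zmodType} {d : U -> V} {I} {s : seq I} {P : pred I}
    {F : I -> U} :
  {morph d : u v / u + v} ->
  d (\sum_(i <- s | P i) F i) = \sum_(i <- s | P i) d (F i).
Proof. by move=> dD; apply: big_morph => //; apply: morph_add0. Qed.

Lemma tofrac_inj (R : idomainType) : injective (@tofrac R).
Proof. by move=> a b /eqP; rewrite tofrac_eq => /eqP. Qed.

Lemma tofrac_divX_mulX {R : idomainType} {x : R} r {n N : nat} :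
  x != 0 -> (n <= N)%N ->
  tofrac r / tofrac (x ^+ n) * tofrac (x ^+ N) = tofrac (r * x ^+ (N - n)).
Proof.
move=> x_neq0 le_nN; rewrite -{1}(subnK le_nN) exprD !tofracM mulrCA divfK.
  by rewrite mulrC.
by rewrite tofrac_eq0 expf_neq0.
Qed.

Section GradedDomain.
Context {k : fieldType} {R : idomainType} {f : {rmorphism k -> R}}.
Context {G : nat -> R -> Prop}.
Hypothesis hG : Ngrading f G.

Lemma homog0 j : G j 0.
Proof. by case: hG. Qed.

Lemma homogD {j a b} : G j a -> G j b -> G j (a + b).
Proof. by case: hG => _ [+ _]; apply. Qed.

Lemma homogN {j a} : G j a -> G j (- a).
Proof. by case: hG => _ [_ [hZ _]] ha; rewrite -mulN1r -(rmorphN1 f); apply: hZ. Qed.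

Lemma homogM {i j a b} : G i a -> G j b -> G (i + j) (a * b).
Proof. by case: hG => _ [_ [_ [+ _]]]; apply. Qed.

Lemma homog1 : G 0 1.
Proof. by case: hG => _ [_ [_ [_ [_ [_ ->]]]]]; exists 1; rewrite rmorph1. Qed.

Lemma homogX {j a} m : G j a -> G (j * m) (a ^+ m).
Proof.
move=> ha; elim: m => [|m IHm]; first by rewrite muln0 expr0; apply: homog1.
by rewrite exprS mulnS; apply: homogM.
Qed.

Lemma homog_sum_inj {n} {a b : nat -> R} :
  (forall j, G j (a j)) -> (forall j, G j (b j)) ->
  \sum_(j < n) a j = \sum_(j < n) b j -> forall j, (j < n)%N -> a j = b j.
Proof.
case: hG => _ [_ [_ [_ [_ [direct _]]]]] ha hb eq_ab j lt_jn; apply/eqP.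
rewrite -subr_eq0; apply/eqP/(direct n (fun j => a j - b j)) => //.
  by move=> i; apply/homogD/homogN.
by rewrite sumrB eq_ab subrr.
Qed.

Lemma homog_decomp r : exists na : nat * (nat -> R),
  [/\ forall j, G j (na.2 j), forall j, (na.1 <= j)%N -> na.2 j = 0
    & r = \sum_(j < na.1) na.2 j].
Proof.
case: hG => _ [_ [_ [_ [/(_ r) [n [a [ha ->]]] _]]]].
exists (n, fun j => if (j < n)%N then a j else 0); split => /=.
- by move=> j; case: ifP => _; [apply: ha | apply: homog0].
- by move=> j; rewrite ltnNge => ->.
- by apply: eq_bigr => j _; rewrite ltn_ord.
Qed.

Definition homog_decomposition r :=
  proj1_sig (constructive_indefinite_description _ (homog_decomp r)).
Definition hbound r := (homog_decomposition r).1.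
Definition hcomp j r := (homog_decomposition r).2 j.

Lemma hcomp_spec r :
  [/\ forall j, G j (hcomp j r), forall j, (hbound r <= j)%N -> hcomp j r = 0
    & r = \sum_(j < hbound r) hcomp j r].
Proof.
by rewrite /hcomp /hbound /homog_decomposition; case: constructive_indefinite_description.
Qed.

Lemma hcomp_homog j r : G j (hcomp j r).
Proof. by case: (hcomp_spec r). Qed.

Lemma hcomp_eq0 j r : (hbound r <= j)%N -> hcomp j r = 0.
Proof. by case: (hcomp_spec r) => _ + _; apply. Qed.

Lemma hcomp_sum {n r} : (hbound r <= n)%N -> r = \sum_(j < n) hcomp j r.
Proof.
move=> le_rn; rewrite (sum_ord_widen0 le_rn); first by case: (hcomp_spec r).
by move=> j; apply: hcomp_eq0.
Qed.

Lemma hcomp_unique n (b : nat -> R) :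
  (forall j, G j (b j)) -> (forall j, (n <= j)%N -> b j = 0) ->
  forall j, hcomp j (\sum_(i < n) b i) = b j.
Proof.
move=> hb b0 j; set r := \sum_(i < n) b i; set m := maxn n (hbound r).
have eq_sums : \sum_(i < m) hcomp i r = \sum_(i < m) b i.
  by rewrite -hcomp_sum ?leq_maxr // (sum_ord_widen0 (leq_maxl _ _)).
case: (ltnP j m) => [lt_jm|]; first exact: (homog_sum_inj (hcomp_homog^~ r) hb eq_sums).
rewrite geq_max => /andP[le_nj le_rj].
by rewrite hcomp_eq0 // b0.
Qed.

Lemma hcomp_homogE j {l h} : G l h -> hcomp j h = if j == l then h else 0.
Proof.
move=> hh; have sum_h : h = \sum_(i < l.+1) (if i == l :> nat then h else 0).
  by rewrite -big_mkcond big_ord1_eq ltnSn.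
rewrite {1}sum_h; apply: (@hcomp_unique l.+1 (fun i => if i == l then h else 0)).
- by move=> i; case: eqP => [->|_] //; apply: homog0.
- by move=> i /gtn_eqF ->.
Qed.

Lemma hcomp_is_nmod_morphism j : nmod_morphism (hcomp j).
Proof.
split.
  by have := @hcomp_unique 0 (fun=> 0) (fun=> homog0 _) (fun _ _ => erefl) j;
  rewrite big_ord0.
move=> r s; set n := maxn (hbound r) (hbound s).
have -> : r + s = \sum_(i < n) (hcomp i r + hcomp i s).
  by rewrite big_split -!hcomp_sum ?leq_maxl ?leq_maxr.
apply: (@hcomp_unique n (fun i => hcomp i r + hcomp i s)).
  by move=> i; apply: homogD; apply: hcomp_homog.
by move=> i; rewrite geq_max => /andP[lr ls]; rewrite !hcomp_eq0 ?addr0.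
Qed.

HB.instance Definition _ j :=
  GRing.isNmodMorphism.Build R R (hcomp j) (hcomp_is_nmod_morphism j).

Lemma hcompM_homog {c h} y t : G c h ->
  hcomp t (h * y) = if (c <= t)%N then h * hcomp (t - c) y else 0.
Proof.
move=> hh; rewrite {1}(hcomp_sum (leqnn (hbound y))) mulr_sumr raddf_sum /=.
under eq_bigr => m _ do rewrite (hcomp_homogE t (homogM hh (hcomp_homog m y))).
case: leqP => [le_ct|lt_tc]; last by rewrite big1 // => m _; case: eqP => // ?; lia.
have shift m : (t == c + m)%N = (m == t - c)%N by apply/eqP/eqP; lia.
under eq_bigr => m _ do rewrite shift.
rewrite -big_mkcond (big_ord1_eq _ (fun m => h * hcomp m y)); case: ltnP => // le_yt.
by rewrite hcomp_eq0 ?mulr0.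
Qed.

Definition hcompz (z : int) r := if z is Posz n then hcomp n r else 0.

Lemma hcompz_homog z r : Gz G z (hcompz z r).
Proof. by case: z => n //=; apply: hcomp_homog. Qed.

Lemma hcompz_is_nmod_morphism z : nmod_morphism (hcompz z).
Proof. by case: z => n; split => [|r s] /=; rewrite ?raddf0 ?raddfD ?addr0. Qed.

HB.instance Definition _ z :=
  GRing.isNmodMorphism.Build R R (hcompz z) (hcompz_is_nmod_morphism z).

Lemma hcompzM_homog {c h} z y : G c h -> hcompz (c%:Z + z) (h * y) = h * hcompz z y.
Proof.
move=> hh; case: z => n.
  by rewrite -PoszD /= (hcompM_homog _ _ hh) leq_addr addKn.
rewrite /= mulr0; case: (ltnP n c) => [lt_nc|le_cn].
  have -> : c%:Z + Negz n = (c - n.+1)%N%:Z by rewrite NegzE; lia.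
  by rewrite /= (hcompM_homog _ _ hh); case: ifP => //; lia.
by have -> : c%:Z + Negz n = Negz (n - c) by rewrite !NegzE; lia.
Qed.

Section DegreePart.
Variable d : R -> R.
Hypothesis d_add : {morph d : u v / u + v}.

Definition deg_part (a : int) r :=
  \sum_(j < hbound r) hcompz (j%:Z + a) (d (hcomp j r)).

Lemma deg_part_widen a r n : (hbound r <= n)%N ->
  deg_part a r = \sum_(j < n) hcompz (j%:Z + a) (d (hcomp j r)).
Proof.
move=> le_rn; symmetry.
apply: (@sum_ord_widen0 _ _ _ (fun j => hcompz (j%:Z + a) (d (hcomp j r)))) => // j le_rj.
by rewrite hcomp_eq0 // (morph_add0 d_add) raddf0.
Qed.

Lemma deg_partD a : {morph deg_part a : u v / u + v}.
Proof.
move=> r s; set n := maxn (hbound (r + s)) (maxn (hbound r) (hbound s)).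
rewrite !(@deg_part_widen a _ n) ?leq_max ?leqnn ?orbT // -big_split /=.
by apply: eq_bigr => j _; rewrite raddfD d_add raddfD.
Qed.

Lemma deg_part_homog a {l h} : G l h -> deg_part a h = hcompz (l%:Z + a) (d h).
Proof.
move=> hh; rewrite (@deg_part_widen a h (maxn (hbound h) l.+1)) ?leq_maxl //.
under eq_bigr => j _ do rewrite (hcomp_homogE _ hh) [d _]fun_if (morph_add0 d_add)
  [hcompz _ _]fun_if raddf0.
rewrite -big_mkcond (big_ord1_eq _ (fun j => hcompz (j%:Z + a) (d h))).
by rewrite leq_max ltnSn orbT.
Qed.

Lemma deg_part_has_degree a : op_has_degree G a (deg_part a).
Proof. by move=> j r hr; rewrite (deg_part_homog _ hr); apply: hcompz_homog. Qed.

End DegreePart.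

Definition vanish_below (L : nat) y := forall t, (t < L)%N -> hcomp t y = 0.

Lemma vanish_below_le L L' y : (L' <= L)%N -> vanish_below L y -> vanish_below L' y.
Proof. by move=> le_L'L hy t lt_tL'; apply/hy/(leq_trans lt_tL'). Qed.

Lemma vanish_belowD L y z :
  vanish_below L y -> vanish_below L z -> vanish_below L (y + z).
Proof. by move=> hy hz t lt_tL; rewrite raddfD /= hy ?hz ?addr0. Qed.

Lemma vanish_belowM_homog {c h L y} :
  G c h -> vanish_below L y -> vanish_below (c + L) (h * y).
Proof.
move=> hh hy t lt_t; rewrite (hcompM_homog _ _ hh); case: leqP => // le_ct.
by rewrite hy ?mulr0 //; lia.
Qed.

Lemma homog_vanish_below_eq0 D L y : G D y -> vanish_below L y -> (D < L)%N -> y = 0.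
Proof. by move=> hy hL lt_DL; rewrite -(hL D lt_DL) (hcomp_homogE _ hy) eqxx. Qed.

Section PositiveCharacteristic.
Context {p : nat}.
Hypothesis pchR : p \in [pchar R].

Lemma expr_sum_pchar e I (s : seq I) (P : pred I) (F : I -> R) :
  (\sum_(i <- s | P i) F i) ^+ (p ^ e) = \sum_(i <- s | P i) F i ^+ (p ^ e).
Proof.
have p_gt0 := prime_gt0 (pcharf_prime pchR).
apply: (big_morph (fun u : R => u ^+ (p ^ e))) => [u v|]; last first.
  by rewrite expr0n expn_eq0 gtn_eqF.
apply: exprDn_pchar.
by rewrite pnatX (eq_pnat _ (pcharf_eq pchR)) pnat_id ?(pcharf_prime pchR).
Qed.

(* p^e-th powers of homogeneous elements are homogeneous, so taking a graded
   part of d preserves R^{p^e}-linearity. *)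
Lemma deg_part_Hom_pe {d} a {e} : Hom_pe p e d -> Hom_pe p e (deg_part d a).
Proof.
case=> d_add d_lin; split; first exact: deg_partD.
have deg_partD_sum := morph_add_sum (deg_partD _ d_add a).
have lin_homog_homog c l b s : G c b -> G l s ->
    deg_part d a (b ^+ (p ^ e) * s) = b ^+ (p ^ e) * deg_part d a s.
  move=> hb hs; rewrite (deg_part_homog _ d_add _ (homogM (homogX _ hb) hs)).
  rewrite (deg_part_homog _ d_add _ hs) d_lin PoszD -addrA.
  exact: (hcompzM_homog _ _ (homogX _ hb)).
have lin_homog c b s : G c b ->
    deg_part d a (b ^+ (p ^ e) * s) = b ^+ (p ^ e) * deg_part d a s.
  move=> hb; rewrite [in LHS](hcomp_sum (leqnn (hbound s))) mulr_sumr deg_partD_sum.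
  rewrite [in RHS](hcomp_sum (leqnn (hbound s))) deg_partD_sum mulr_sumr.
  by apply: eq_bigr => l _; apply: lin_homog_homog hb (hcomp_homog l s).
move=> b s; rewrite [in LHS](hcomp_sum (leqnn (hbound b))) expr_sum_pchar.
rewrite mulr_suml deg_partD_sum [in RHS](hcomp_sum (leqnn (hbound b))).
rewrite expr_sum_pchar mulr_suml.
by apply: eq_bigr => c _; apply: lin_homog (hcomp_homog c b).
Qed.

Section NoNegativeDegree.
Hypothesis noneg : ~ DR_has_neg_degree p G.

Lemma neg_degree_op_eq0 {d a} r :
  in_DR p d -> a < 0 -> op_has_degree G a d -> d r = 0.
Proof.
move=> d_DR a_neg d_deg; apply/eqP; apply: contraT => dr_neq0.
by exfalso; apply: noneg; exists d, a; split => //; exists r.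
Qed.

Lemma Hom_pe_homog_vanish_below {d e l h} :
  Hom_pe p e d -> G l h -> vanish_below l (d h).
Proof.
move=> hd hh t lt_tl; have deg_neg : t%:Z - l%:Z < 0 by rewrite subr_lt0 ltz_nat.
have := neg_degree_op_eq0 h (ex_intro _ e (deg_part_Hom_pe (t%:Z - l%:Z) hd))
  deg_neg (deg_part_has_degree _ hd.1 _).
by rewrite (deg_part_homog _ hd.1 _ hh) addrC subrK.
Qed.

Lemma Hom_pe_vanish_below {d e L y} :
  Hom_pe p e d -> vanish_below L y -> vanish_below L (d y).
Proof.
move=> hd hy t lt_tL; rewrite (hcomp_sum (leqnn (hbound y))) (morph_add_sum hd.1).
rewrite raddf_sum /= big1 // => j _; case: (ltnP j L) => [lt_jL|le_Lj].
  by rewrite hy // (morph_add0 hd.1) raddf0.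
exact: (Hom_pe_homog_vanish_below hd (hcomp_homog j y) _ (leq_trans lt_tL le_Lj)).
Qed.

Section Localization.
Context {x : R} {δ : nat}.
Hypotheses (hx : G δ x) (x_neq0 : x != 0).

Lemma vanish_below_mulX r m : vanish_below (δ * m) (r * x ^+ m).
Proof.
rewrite mulrC -[X in vanish_below X]addn0.
by apply: vanish_belowM_homog (homogX _ hx) _ => t.
Qed.

(* u x^N lies in R_{>= δ(N - M)} for all large N, as it does for u = r / x^M. *)
Definition pole_le (M : nat) (u : {fraction R}) :=
  exists N0, forall N, (N0 <= N)%N ->
    exists2 w, u * tofrac (x ^+ N) = tofrac w & vanish_below (δ * (N - M)) w.

Lemma pole_le0 M : pole_le M 0.
Proof.
by exists 0%N => N _; exists 0; rewrite ?mul0r ?raddf0 // => t _; rewrite raddf0.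
Qed.

Lemma pole_leD M u v : pole_le M u -> pole_le M v -> pole_le M (u + v).
Proof.
case=> [N1 h1] [N2 h2]; exists (maxn N1 N2) => N.
rewrite geq_max => /andP[/h1 [w1 e1 v1] /h2 [w2 e2 v2]].
by exists (w1 + w2); [rewrite mulrDl e1 e2 rmorphD | apply: vanish_belowD].
Qed.

Lemma pole_le_sum M I (s : seq I) (P : pred I) (F : I -> {fraction R}) :
  (forall i, P i -> pole_le M (F i)) -> pole_le M (\sum_(i <- s | P i) F i).
Proof. by move=> hF; apply: big_ind => //; [apply: pole_le0 | apply: pole_leD]. Qed.

Lemma pole_le_mon {M M' u} : (M <= M')%N -> pole_le M u -> pole_le M' u.
Proof.
move=> le_MM' [N0 h]; exists N0 => N /h [w e hw]; exists w => //.
by apply: vanish_below_le hw; rewrite leq_mul // leq_sub2l.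
Qed.

Lemma pole_le_Dact d r n v :
  Dact p x d (tofrac r / tofrac (x ^+ n)) v -> pole_le n v.
Proof.
case=> e [r' [n' [hd le_n'q eq_u ->]]]; set q := (p ^ e)%N.
have hw : vanish_below (δ * (q - n)) (d (r' * x ^+ (q - n'))).
  case: (leqP n q) => [le_nq|lt_qn]; last first.
    have -> : (q - n = 0)%N by apply/eqP; rewrite subn_eq0 ltnW.
    by rewrite muln0 => t.
  have -> : r' * x ^+ (q - n') = r * x ^+ (q - n).
    apply: tofrac_inj.
    by rewrite -(tofrac_divX_mulX r' x_neq0 le_n'q) -eq_u tofrac_divX_mulX.
  exact: Hom_pe_vanish_below hd (vanish_below_mulX _ _).
exists q => N le_qN; exists (d (r' * x ^+ (q - n')) * x ^+ (N - q)).
  exact: tofrac_divX_mulX.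
rewrite mulrC; apply: vanish_below_le (vanish_belowM_homog (homogX _ hx) hw).
by rewrite -mulnDr leq_mul2l; apply/orP; right; lia.
Qed.

Lemma not_pole_le_inv M : (0 < δ)%N -> ~ pole_le M (tofrac 1 / tofrac (x ^+ M.+1)).
Proof.
move=> δ_gt0 [N0 /(_ (maxn N0 M.+1) (leq_maxl _ _))] [w].
have le_MN : (M.+1 <= maxn N0 M.+1)%N by apply: leq_maxr.
rewrite tofrac_divX_mulX // mul1r => /tofrac_inj <- hw.
suff : x ^+ (maxn N0 M.+1 - M.+1) = 0 by apply/eqP; rewrite expf_neq0.
apply: homog_vanish_below_eq0 (homogX _ hx) hw _.
by rewrite ltn_mul2l δ_gt0 /=; lia.
Qed.

Lemma loc_not_fg : (0 < δ)%N -> ~ loc_fg_over_DR p x.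
Proof.
move=> δ_gt0 [t [g [g_loc g_gen]]].
have /fin_all_exists [rn g_eq] :
    forall i, exists rn : R * nat, g i = tofrac rn.1 / tofrac (x ^+ rn.2).
  by move=> i; have [r [n ->]] := g_loc i; exists (r, n).
set M := (\max_(i < t) (rn i).2)%N.
have [|d [v [_ d_act u_eq]]] := g_gen (tofrac 1 / tofrac (x ^+ M.+1)).
  by exists 1, M.+1.
apply: (not_pole_le_inv M δ_gt0); rewrite u_eq; apply: pole_le_sum => i _.
have le_iM : ((rn i).2 <= M)%N by apply: leq_bigmax.
apply: (pole_le_mon le_iM).
by have := d_act i; rewrite g_eq; apply: pole_le_Dact.
Qed.

End Localization.
End NoNegativeDegree.
End PositiveCharacteristic.
End GradedDomain.

Theorem proposition3p2 (p : nat) (k : fieldType) (R : idomainType)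
    (f : {rmorphism k -> R}) (G : nat -> R -> Prop) (x : R) :
  p \in [pchar k] ->
  perfect_field p k ->
  finite_type f ->
  Ngrading f G ->
  x != 0 ->
  (exists d : nat, (0 < d)%N /\ G d x) ->
  loc_fg_over_DR p x ->
  DR_has_neg_degree p G.
Proof.
(* Perfectness and finite type only serve to identify D_R with the union of
   the Hom_{R^{p^e}}(R,R), which is how in_DR is defined. *)
move=> pk _ _ hG x_neq0 [δ [δ_gt0 hx]] fg.
apply: NNPP => noneg.
exact: (loc_not_fg hG (rmorph_pchar f pk) noneg hx x_neq0 δ_gt0 fg).
Qed.
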